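(* For every price $p>0$ and every ordering $\pi$ of $[n]$, \[ \mathbb{E}_{\mathbf v\sim\mathcal F}[\mathrm{Rev}(\mathbf v,p,\pi)]\ \ge\ p\Big(1-\prod_{i\in[n]}\big(1-\mathbb{E}_{v_i\sim\mathcal F_i}[y^*_i(v_i,p)]\big)\Big). \]
   Context: There are $n$ agents $[n]$ and one divisible item of size $1$. Each agent $i$ has a non-decreasing concave valuation $v_i:[0,1]\to\mathbb{R}_{\ge0}$ drawn independently from a known distribution $\mathcal F_i$; $\mathbf v\sim\mathcal F=\mathcal F_1\times\cdots\times\mathcal F_n$. For a price $p>0$, $y^*_i(v_i,p)\in[0,1]$ is a maximizer of $z\mapsto v_i(z)-pz$ over $[0,1]$ (fixed measurable selection). For an ordering $\pi$, with $B_\pi(i)$ the agents acting before $i$, agent $i$ buys $y_i(\mathbf v,p,\pi)=\min\{y^*_i(v_i,p),\max\{0,1-\sum_{j\in B_\pi(i)}y^*_j(v_j,p)\}\}$ in sequential posted pricing at price $p$ per unit, and $\mathrm{Rev}(\mathbf v,p,\pi)=p\sum_i y_i(\mathbf v,p,\pi)$. *)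

From HB Require Import structures.
From mathcomp Require Import all_boot all_order all_algebra perm.
From mathcomp Require Import all_classical all_reals all_analysis.
Set Implicit Arguments. Unset Strict Implicit. Unset Printing Implicit Defensive.
Import Order.TTheory GRing.Theory Num.Theory.
Local Open Scope classical_set_scope.
Local Open Scope ring_scope.

Section defs.
Context {R : realType}.

Definition valid_valuation (v : R -> R) : Prop :=
  [/\ (forall x y, 0 <= x -> x <= y -> y <= 1 -> v x <= v y),
      (forall x y t, 0 <= x <= 1 -> 0 <= y <= 1 -> 0 <= t <= 1 ->
          t * v x + (1 - t) * v y <= v (t * x + (1 - t) * y))
    & (forall x, 0 <= x <= 1 -> 0 <= v x)].

Definition is_demand (v : R -> R) (p y : R) : Prop :=
  0 <= y <= 1 /\ forall z, 0 <= z <= 1 -> v z - p * z <= v y - p * y.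

(* ordering pi : position k is occupied by agent pi k;
   B_pi(i) = agents acting before i *)
Definition before {n : nat} (pi : {perm 'I_n}) (j i : 'I_n) : bool :=
  ((pi^-1)%g j < (pi^-1)%g i)%N.

(* amount bought by agent i in sequential posted pricing, given the
   demands ys j = y*_j(v_j, p) *)
Definition bought {n : nat} (ys : 'I_n -> R) (pi : {perm 'I_n}) (i : 'I_n) : R :=
  Num.min (ys i) (Num.max 0 (1 - \sum_(j < n | before pi j i) ys j)).

Definition revenue {n : nat} (ys : 'I_n -> R) (p : R) (pi : {perm 'I_n}) : R :=
  p * \sum_(i < n) bought ys pi i.

End defs.

Definition mutually_independent {R : realType} {d : measure_display}
  {Omega : measurableType d} (P : probability Omega R)
  {d' : measure_display} {T : measurableType d'} {n : nat}
  (X : 'I_n -> Omega -> T) : Prop :=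
  (forall i, measurable_fun setT (X i)) /\
  forall B : 'I_n -> set T, (forall i, measurable (B i)) ->
    P (\bigcap_i (X i @^-1` B i)) = (\prod_(i < n) P (X i @^-1` B i))%E.

From HB Require Import structures.
From mathcomp Require Import all_boot all_order all_algebra perm.
From mathcomp Require Import all_classical all_reals all_analysis.
From mathcomp Require Import measurable_realfun lra.
Import Order.TTheory GRing.Theory Num.Theory.
Local Open Scope classical_set_scope.
Local Open Scope ring_scope.

(* Write Y_i for the demand of agent i at price p.  Whatever the order, the
   agents jointly buy min(1, sum_i Y_i) (lemma revenueE), and the union bound
   1 - sum_i Y_i <= prod_i (1 - Y_i) gives the pointwise estimate
   Rev >= p (1 - prod_i (1 - Y_i)) (lemma revenue_ge).  Taking expectations,
   the theorem reduces to E[prod_i (1 - Y_i)] = prod_i E[1 - Y_i], which holds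
   because the Y_i are functions of independent random elements.

   Since independence is only given on events, this product rule is proved
   first for simple functions of the X_i (expand the product of sums of
   indicators, lemma mean_prod_simple), and then for [0,1]-valued measurable
   functions of the X_i by approximating each factor from below by its
   staircase floor(K z)/K, at the cost of an error n/K in either direction
   (theorem mean_prod_independent). *)

Set Implicit Arguments. Unset Strict Implicit.

Section RealInequalities.
Variable R : realType.

Lemma one_sub_sum_le_prod n (y : 'I_n -> R) : (forall i, 0 <= y i <= 1) ->
  1 - \sum_i y i <= \prod_i (1 - y i).
Proof.
elim: n y => [|n IH] y hy; first by rewrite !big_ord0 subr0.
rewrite !big_ord_recr /=.
have := IH (fun i => y (widen_ord (leqnSn n) i)) (fun i => hy _).
set S := \sum_(i < n) _; set Q := \prod_(i < n) _ => hQS.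
have hS : 0 <= S by apply: sumr_ge0 => i _; case/andP: (hy (widen_ord (leqnSn n) i)).
case/andP: (hy ord_max) => y0 y1.
have : 0 <= (Q - (1 - S)) * (1 - y ord_max) by apply: mulr_ge0; lra.
have : 0 <= S * y ord_max by apply: mulr_ge0.
nra.
Qed.

Lemma prod_le_prod_add_sum n (a b : 'I_n -> R) :
  (forall i, 0 <= b i <= a i) -> (forall i, a i <= 1) ->
  \prod_i a i <= \prod_i b i + \sum_i (a i - b i).
Proof.
elim: n a b => [|n IH] a b hb ha; first by rewrite !big_ord0 addr0.
rewrite !big_ord_recr /=.
have := IH (fun i => a (widen_ord (leqnSn n) i)) (fun i => b (widen_ord (leqnSn n) i))
   (fun i => hb _) (fun i => ha _).
set A := \prod_(i < n) _; set B := \prod_(i < n) _; set D := \sum_(i < n) _ => hABD.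
have hb' (i : 'I_n) := hb (widen_ord (leqnSn n) i).
have ha' (i : 'I_n) := ha (widen_ord (leqnSn n) i).
have hA : 0 <= A by apply: prodr_ge0 => i _; case/andP: (hb' i) => ? ?; lra.
have hB1 : B <= 1.
  by apply: prodr_ile1 => i _; case/andP: (hb' i) => ? ?; have := ha' i; lra.
have hD : 0 <= D by apply: sumr_ge0 => i _; case/andP: (hb' i) => ? ?; lra.
case/andP: (hb ord_max) => b0 ba; have a1 := ha ord_max.
have : A * a ord_max <= (B + D) * a ord_max by apply: ler_wpM2r; lra.
have : 0 <= (1 - B) * (a ord_max - b ord_max) by apply: mulr_ge0; lra.
have : 0 <= D * (1 - a ord_max) by apply: mulr_ge0; lra.
nra.
Qed.

Lemma prod_in01 n (a : 'I_n -> R) : (forall i, 0 <= a i <= 1) -> 0 <= \prod_i a i <= 1.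
Proof. by move=> a01; rewrite prodr_ge0 ?prodr_ile1 // => i _; case/andP: (a01 i). Qed.

Lemma le_of_le_add_inv (x y : R) (m : nat) :
  (forall K : nat, (0 < K)%N -> x <= y + m%:R / K%:R) -> x <= y.
Proof.
move=> h; apply/ler_addgt0Pr => e he.
pose K := (Num.truncn (m%:R / e)).+1.
apply: (le_trans (h K isT)); rewrite lerD2l ler_pdivrMr ?ltr0n // mulrC.
by rewrite -ler_pdivrMr // ltW // truncnS_gt.
Qed.

End RealInequalities.

Section SequentialPricing.
Variable R : realType.

(* One step of the sale: if a total S has been sold so far, an agent
   demanding a >= 0 raises the amount sold from min 1 S to min 1 (S + a). *)
Lemma min_step (a S : R) : 0 <= a -> 0 <= S ->
  Num.min 1 S + Num.min a (Num.max 0 (1 - S)) = Num.min 1 (S + a).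
Proof.
move=> ha hS; rewrite maxEle; case: leP => h0; rewrite !minEle;
repeat case: leP => ?; lra.
Qed.

Lemma sum_ord_ltS n (F : 'I_n -> R) k (hk : (k < n)%N) :
  \sum_(i : 'I_n | (i < k.+1)%N) F i =
  \sum_(i : 'I_n | (i < k)%N) F i + F (Ordinal hk).
Proof.
rewrite (bigD1 (Ordinal hk)) //= addrC; congr (_ + _).
by apply: eq_bigl => i; rewrite ltnS ltn_neqAle -val_eqE andbC.
Qed.

Lemma sold_prefix n (a : 'I_n -> R) k : (forall i, 0 <= a i) -> (k <= n)%N ->
  \sum_(i : 'I_n | (i < k)%N)
     Num.min (a i) (Num.max 0 (1 - \sum_(m : 'I_n | (m < i)%N) a m))
  = Num.min 1 (\sum_(m : 'I_n | (m < k)%N) a m).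
Proof.
move=> ha; elim: k => [|k IH] hk.
  by rewrite !big_pred0 // minEle ler10.
rewrite (sum_ord_ltS _ hk) (sum_ord_ltS a hk) IH; last exact: ltnW.
by rewrite min_step // sumr_ge0.
Qed.

Lemma revenueE n (ys : 'I_n -> R) (p : R) (pi : {perm 'I_n}) :
  (forall i, 0 <= ys i) -> revenue ys p pi = p * Num.min 1 (\sum_i ys i).
Proof.
move=> hy; congr (p * _).
rewrite (reindex_inj (@perm_inj _ pi)) [in RHS](reindex_inj (@perm_inj _ pi)).
have -> : \sum_i bought ys pi (pi i) =
  \sum_(i : 'I_n | (i < n)%N) Num.min (ys (pi i))
     (Num.max 0 (1 - \sum_(m : 'I_n | (m < i)%N) ys (pi m))).
  apply: eq_big => [i|i _]; first by rewrite ltn_ord.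
  rewrite /bought (reindex_inj (@perm_inj _ pi)).
  by congr (Num.min _ (Num.max 0 (1 - _))); apply: eq_bigl => m; rewrite /before !permK.
rewrite sold_prefix //.
by congr (Num.min 1 _); apply: eq_bigl => i; rewrite ltn_ord.
Qed.

Lemma revenue_bounds n (ys : 'I_n -> R) (p : R) (pi : {perm 'I_n}) : 0 <= p ->
  (forall i, 0 <= ys i) -> 0 <= revenue ys p pi <= p.
Proof.
move=> p0 y0; have s0 : 0 <= \sum_i ys i by apply: sumr_ge0.
by rewrite revenueE // mulr_ge0 ?ler_piMr ?ge_min ?lexx ?le_min ?ler01.
Qed.

Lemma revenue_ge n (ys : 'I_n -> R) (p : R) (pi : {perm 'I_n}) : 0 <= p ->
  (forall i, 0 <= ys i <= 1) -> p * (1 - \prod_i (1 - ys i)) <= revenue ys p pi.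
Proof.
move=> p0 y01; rewrite revenueE => [|i]; last by case/andP: (y01 i).
rewrite ler_wpM2l // le_min; apply/andP; split.
  by rewrite lerBlDl lerDr prodr_ge0 // => i _; case/andP: (y01 i); rewrite subr_ge0.
by have := one_sub_sum_le_prod y01; lra.
Qed.

End SequentialPricing.

Section Staircase.
Variable R : realType.

(* The staircase approximation of z at mesh 1/K: floor(K z) / K, written
   as an average of threshold indicators so that it is a simple function. *)
Definition staircase (K : nat) (z : R) : R :=
  K%:R^-1 * \sum_(j < K) ((j.+1)%:R / K%:R <= z)%R%:R.

Lemma staircase_bounds (K : nat) (z : R) : (0 < K)%N -> 0 <= z <= 1 ->
  [/\ 0 <= staircase K z, staircase K z <= z & z <= staircase K z + K%:R^-1].
Proof.
move=> hK /andP[z0 z1].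
have k0 : 0 < K%:R :> R by rewrite ltr0n.
have kz0 : 0 <= K%:R * z by rewrite mulr_ge0 // ltW.
pose t := Num.truncn (K%:R * z).
have t_le : t%:R <= K%:R * z by rewrite truncn_le.
have t_gt : K%:R * z < t.+1%:R by rewrite truncnS_gt.
have tK : (t <= K)%N.
  rewrite /t truncn_le_nat; apply: le_lt_trans (ler_wpM2l (ltW k0) z1) _.
  by rewrite mulr1 ltr_nat.
have -> : staircase K z = K%:R^-1 * t%:R.
  rewrite /staircase (eq_bigr (fun j : 'I_K => ((j < t)%N)%:R)); last first.
    by move=> j _; rewrite ler_pdivrMr // mulrC truncn_ge_nat.
  congr (_ * _); rewrite -natr_sum; congr (_%:R).
  rewrite -[in RHS](muln1 t) -[in RHS](subn0 t) -sum_nat_const_nat big_mkord.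
  rewrite (big_ord_widen _ (fun=> 1%N) tK) [RHS]big_mkcond.
  by apply: eq_bigr => j _; case: ltnP.
have hz : z = K%:R^-1 * (K%:R * z) by rewrite mulKf // gt_eqF.
have ki0 : 0 <= K%:R^-1 :> R by rewrite invr_ge0 ltW.
split; first exact: mulr_ge0.
  by rewrite [X in _ <= X]hz ler_wpM2l.
by rewrite [X in X <= _]hz -[X in _ + X]mulr1 -mulrDr ler_wpM2l // natr1 ltW.
Qed.

Lemma staircase_indicE (T : Type) (h : T -> R) (K : nat) (w : T) :
  staircase K (h w) =
  K%:R^-1 * \sum_(j < K) \1_(h @^-1` `[(j.+1)%:R / K%:R, +oo[) w.
Proof.
congr (_ * _); apply: eq_bigr => j _.
by rewrite indicE; congr (nat_of_bool _)%:R; apply/idP/idP; rewrite in_setE /= in_itv /= andbT.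
Qed.

End Staircase.

Section BoundedExpectation.
Variables (R : realType) (d : measure_display) (Omega : measurableType d).
Variable P : probability Omega R.

(* The expectation of a real random variable, read as a real number; it is
   only used for measurable functions with values in some [0, M]. *)
Definition mean (f : Omega -> R) : R := fine (\int[P]_w (f w)%:E).

Lemma integral_cst_prob (c : \bar R) : (\int[P]_w (cst c) w = c)%E.
Proof.
rewrite integral_cst //; set PT := (X in (_ * X)%E).
by rewrite (_ : PT = 1%E) ?mule1 //; exact: probability_setT.
Qed.

Lemma integral_bounded (f : Omega -> R) M :
  measurable_fun setT f -> (forall w, 0 <= f w <= M) ->
  (0 <= \int[P]_w (f w)%:E <= M%:E)%E.
Proof.
move=> mf hf; have f0 w : (0 <= (f w)%:E)%E by rewrite lee_fin; case/andP: (hf w).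
rewrite integral_ge0 //=; apply: le_trans (_ : (\int[P]_w (cst M%:E) w <= _)%E).
  apply: ge0_le_integral => //; first exact/measurable_EFinP.
  by move=> w _; rewrite lee_fin; case/andP: (hf w).
by rewrite integral_cst_prob.
Qed.

Lemma meanE (f : Omega -> R) M : measurable_fun setT f -> (forall w, 0 <= f w <= M) ->
  (\int[P]_w (f w)%:E = (mean f)%:E)%E.
Proof.
move=> mf hf; case/andP: (integral_bounded mf hf) => i0 iM.
by rewrite /mean fineK // ge0_fin_numE // (le_lt_trans iM) ?ltry.
Qed.

Lemma mean_bounded (f : Omega -> R) M :
  measurable_fun setT f -> (forall w, 0 <= f w <= M) -> 0 <= mean f <= M.
Proof. by move=> mf hf; have := integral_bounded mf hf; rewrite (meanE mf hf). Qed.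

Lemma le_mean (f g : Omega -> R) M : measurable_fun setT f -> measurable_fun setT g ->
  (forall w, 0 <= f w <= g w) -> (forall w, g w <= M) -> mean f <= mean g.
Proof.
move=> mf mg hfg hg.
have hf w : 0 <= f w <= M by case/andP: (hfg w) => f0 fg; rewrite f0 (le_trans fg).
have hg' w : 0 <= g w <= M by case/andP: (hfg w) => f0 fg; rewrite hg (le_trans f0).
rewrite -lee_fin -(meanE mf hf) -(meanE mg hg').
apply: ge0_le_integral => //; try exact/measurable_EFinP.
- by move=> w _; rewrite lee_fin; case/andP: (hf w).
- by move=> w _; rewrite lee_fin; case/andP: (hfg w).
Qed.

Lemma mean_cst c : mean (fun _ => c) = c.
Proof.
rewrite /mean (_ : (fun _ => c%:E) = cst c%:E) //.
by rewrite integral_cst_prob.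
Qed.

Lemma meanD (f g : Omega -> R) M : measurable_fun setT f -> measurable_fun setT g ->
  (forall w, 0 <= f w <= M) -> (forall w, 0 <= g w <= M) ->
  mean (fun w => f w + g w) = mean f + mean g.
Proof.
move=> mf mg hf hg.
have mfg : measurable_fun setT (fun w => f w + g w) by apply: measurable_funD.
have hfg w : 0 <= f w + g w <= M + M.
  by case/andP: (hf w) => ? ?; case/andP: (hg w) => ? ?; apply/andP; split; lra.
apply: EFin_inj; rewrite -(meanE mfg hfg) EFinD -(meanE mf hf) -(meanE mg hg).
under eq_integral do rewrite EFinD.
apply: ge0_integralD => //; try exact/measurable_EFinP.
- by move=> w _; rewrite lee_fin; case/andP: (hf w).
- by move=> w _; rewrite lee_fin; case/andP: (hg w).
Qed.

Lemma meanZ (f : Omega -> R) c M : 0 <= c -> measurable_fun setT f ->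
  (forall w, 0 <= f w <= M) -> mean (fun w => c * f w) = c * mean f.
Proof.
move=> c0 mf hf.
have mcf : measurable_fun setT (fun w => c * f w) by apply: measurable_funM.
have hcf w : 0 <= c * f w <= c * M.
  by case/andP: (hf w) => ? ?; rewrite mulr_ge0 ?ler_wpM2l.
apply: EFin_inj; rewrite -(meanE mcf hcf) EFinM -(meanE mf hf).
under eq_integral do rewrite EFinM.
apply: ge0_integralZl => //; first exact/measurable_EFinP.
by move=> w _; rewrite lee_fin; case/andP: (hf w).
Qed.

Lemma mean_le_add_cst (f h : Omega -> R) (c M : R) :
  measurable_fun setT f -> measurable_fun setT h ->
  (forall w, 0 <= f w) -> (forall w, 0 <= h w <= M) -> 0 <= c ->
  (forall w, f w <= h w + c) -> mean f <= mean h + c.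
Proof.
move=> mf mh f0 hM c0 fhc.
have M0 : 0 <= M by case/andP: (hM point) => h0 hM'; apply: le_trans hM'.
have hMc w : 0 <= h w <= M + c by case/andP: (hM w) => ? ?; apply/andP; split; lra.
have cMc (w : Omega) : 0 <= c <= M + c by apply/andP; split; lra.
rewrite -[c in _ + c]mean_cst -(meanD mh _ hMc cMc) //.
apply: (le_mean mf _ _ (M := M + c)) => [|w|w]; first exact: measurable_funD.
- by rewrite f0 fhc.
- by rewrite lerD2r; case/andP: (hM w).
Qed.

Lemma mean_compl (f : Omega -> R) : measurable_fun setT f ->
  (forall w, 0 <= f w <= 1) -> mean (fun w => 1 - f w) = 1 - mean f.
Proof.
move=> mf hf.
have m1f : measurable_fun setT (fun w => 1 - f w) by apply: measurable_funB.
have h1f w : 0 <= 1 - f w <= 1 by case/andP: (hf w) => ? ?; apply/andP; split; lra.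
have := meanD m1f mf h1f hf.
under eq_fun do rewrite subrK.
by rewrite mean_cst => h1; lra.
Qed.

Lemma mean_indic_sum (I : finType) (E : I -> set Omega) (c : R) : 0 <= c ->
  (forall j, measurable (E j)) ->
  mean (fun w => c * \sum_j \1_(E j) w) = c * \sum_j fine (P (E j)).
Proof.
move=> c0 mE.
have hb w : 0 <= (\sum_j \1_(E j) w : R) <= #|I|%:R.
  rewrite sumr_ge0 /= => [|j _]; last by rewrite indicE.
  rewrite -sum1_card natr_sum; apply: ler_sum => j _; rewrite indicE.
  by case: (_ \in _).
have mS : measurable_fun setT (fun w => \sum_j \1_(E j) w :> R).
  by apply: measurable_sum => j; apply: measurable_indic.
rewrite (meanZ c0 mS hb); congr (_ * _).
rewrite /mean; under eq_integral do rewrite -sumEFin.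
rewrite ge0_integral_sum //; last by move=> j; apply/measurable_EFinP/measurable_indic.
under eq_bigr do rewrite integral_indic // setIT.
rewrite (eq_bigr (fun j => (fine (P (E j)))%:E)) ?sumEFin // => j _.
by rewrite fineK // fin_num_measure.
Qed.

End BoundedExpectation.

Lemma prod_indic (R : realType) (T : Type) (I : finType) (A : I -> set T) (w : T) :
  \prod_i \1_(A i) w = \1_(\bigcap_i A i) w :> R.
Proof.
rewrite [RHS]indicE; case: (boolP (w \in \bigcap_i A i)) => [|/negP].
  by rewrite in_setE => wA; apply: big1 => i _; rewrite indicE mem_set //; exact: wA.
rewrite in_setE => /existsNP [i /= wAi].
by rewrite (bigD1 i) //= indicE memNset ?mul0r.
Qed.

Section Independence.
Variables (R : realType) (d : measure_display) (Omega : measurableType d).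
Variable P : probability Omega R.
Variables (dV : measure_display) (V : measurableType dV) (n : nat).
Variable X : 'I_n -> Omega -> V.
Hypothesis indX : mutually_independent P X.

Lemma measurable_preimage_indep (B : set V) i : measurable B -> measurable (X i @^-1` B).
Proof. by move=> mB; rewrite -[X i @^-1` B]setTI; apply: indX.1. Qed.

(* Expectation is multiplicative on products of simple functions of
   independent random elements: expand the product of sums, and use the
   product rule on each intersection of level sets. *)
Lemma mean_prod_simple K (B : 'I_n -> 'I_K -> set V) (c : R) : 0 <= c ->
  (forall i j, measurable (B i j)) ->
  mean P (fun w => \prod_i (c * \sum_(j < K) \1_(X i @^-1` B i j) w)) =
  \prod_i mean P (fun w => c * \sum_(j < K) \1_(X i @^-1` B i j) w).
Proof.
move=> c0 mB; have mA i j := measurable_preimage_indep i (mB i j).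
have expand w : \prod_i (c * \sum_(j < K) \1_(X i @^-1` B i j) w) =
    c ^+ n * \sum_(f : {ffun 'I_n -> 'I_K}) \1_(\bigcap_i X i @^-1` B i (f i)) w.
  rewrite big_split /= prodr_const card_ord bigA_distr_bigA /=.
  by congr (_ * _); apply: eq_bigr => f _; rewrite prod_indic.
under eq_fun do rewrite expand.
under [RHS]eq_bigr do rewrite mean_indic_sum //.
rewrite mean_indic_sum ?exprn_ge0 //; last first.
  by move=> f; apply: fin_bigcap_measurable; [exact: finite_finset | move=> i _].
rewrite big_split /= prodr_const card_ord bigA_distr_bigA /=; congr (_ * _).
apply: eq_bigr => f _; rewrite (indX.2 (fun i => B i (f i))) //.
rewrite (eq_bigr (fun i => (fine (P (X i @^-1` B i (f i))))%:E)) ?prodEFin // => i _.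
by rewrite fineK // fin_num_measure.
Qed.

Variable g : 'I_n -> V -> R.
Hypothesis mg : forall i, measurable_fun setT (g i).
Hypothesis g01 : forall i w, 0 <= g i (X i w) <= 1.

Let G i w := g i (X i w).
Let S K i w := staircase K (G i w).

Let mG i : measurable_fun setT (G i).
Proof. exact: measurableT_comp (mg i) (indX.1 i). Qed.

Let S_le_G K i w : (0 < K)%N -> 0 <= S K i w <= G i w.
Proof. by move=> K0; case: (staircase_bounds K0 (g01 i w)) => -> ->. Qed.

Let G_le_S K i w : (0 < K)%N -> G i w <= S K i w + K%:R^-1.
Proof. by move=> K0; case: (staircase_bounds K0 (g01 i w)). Qed.

Let S01 K i w : (0 < K)%N -> 0 <= S K i w <= 1.
Proof.
by move=> K0; case/andP: (S_le_G i w K0) => -> SG; case/andP: (g01 i w) => _; apply: le_trans.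
Qed.

Let measurable_level i (a : R) : measurable (g i @^-1` `[a, +oo[).
Proof. by rewrite -[_ @^-1` _]setTI; apply: mg => //; exact: measurable_itv. Qed.

Let S_indic K i : S K i = fun w =>
  K%:R^-1 * \sum_(j < K) \1_(X i @^-1` (g i @^-1` `[(j.+1)%:R / K%:R, +oo[)) w.
Proof. by apply: funext => w; rewrite /S staircase_indicE. Qed.

Let mS K i : measurable_fun setT (S K i).
Proof.
rewrite S_indic; apply: measurable_funM => //; apply: measurable_sum => j.
exact/measurable_indic/measurable_preimage_indep/measurable_level.
Qed.

Let mean_prod_S K : mean P (fun w => \prod_i S K i w) = \prod_i mean P (S K i).
Proof.
under eq_fun do under eq_bigr do rewrite S_indic.
under [RHS]eq_bigr do rewrite S_indic.
by apply: mean_prod_simple => [|i j]; [rewrite invr_ge0 | exact: measurable_level].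
Qed.

Let mean_S_le_G K i : (0 < K)%N -> 0 <= mean P (S K i) <= mean P (G i).
Proof.
move=> K0; case/andP: (mean_bounded P (mS K i) (S01 i ^~ K0)) => -> _ /=.
by apply: (le_mean P (mS K i) (mG i) (M := 1)) => w; [exact: S_le_G | case/andP: (g01 i w)].
Qed.

Let mean_G_le_S K i : (0 < K)%N -> mean P (G i) <= mean P (S K i) + K%:R^-1.
Proof.
move=> K0; apply: (mean_le_add_cst P (mG i) (mS K i) (M := 1)) => [w|w||w].
- by case/andP: (g01 i w).
- exact: S01.
- by rewrite invr_ge0.
- exact: G_le_S.
Qed.

Let sum_inv K : \sum_(i < n) K%:R^-1 = n%:R / K%:R :> R.
Proof. by rewrite sumr_const card_ord mulr_natl. Qed.

(* The expectation of the product exceeds the product of expectations by at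
   most n / K: approximate each factor from below by its staircase. *)
Let mean_prod_le K : (0 < K)%N ->
  mean P (fun w => \prod_i G i w) <= \prod_i mean P (G i) + n%:R / K%:R.
Proof.
move=> K0.
have mpS : measurable_fun setT (fun w => \prod_i S K i w) by apply: measurable_prod.
have mpG : measurable_fun setT (fun w => \prod_i G i w) by apply: measurable_prod.
apply: (@le_trans _ _ (mean P (fun w => \prod_i S K i w) + n%:R / K%:R)).
  apply: (mean_le_add_cst P mpG mpS (M := 1)) => [w|w||w].
  - by apply: prodr_ge0 => i _; case/andP: (g01 i w).
  - by apply: prod_in01 => i; apply: S01.
  - by rewrite divr_ge0.
  - apply: le_trans
      (@prod_le_prod_add_sum _ n (fun i => G i w) (fun i => S K i w) _ _) _.
    + by move=> i; apply: S_le_G.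
    + by move=> i; case/andP: (g01 i w).
    rewrite lerD2l -sum_inv; apply: ler_sum => i _.
    by rewrite lerBlDl; apply: G_le_S.
rewrite lerD2r mean_prod_S; apply: ler_prod => i _; exact: mean_S_le_G.
Qed.

Let prod_mean_le K : (0 < K)%N ->
  \prod_i mean P (G i) <= mean P (fun w => \prod_i G i w) + n%:R / K%:R.
Proof.
move=> K0.
apply: le_trans
  (@prod_le_prod_add_sum _ n (fun i => mean P (G i)) (fun i => mean P (S K i)) _ _) _.
- by move=> i; apply: mean_S_le_G.
- by move=> i; case/andP: (mean_bounded P (mG i) (g01 i)).
rewrite -mean_prod_S; apply: lerD.
  apply: (le_mean P _ _ (M := 1)) => [||w|w]; try exact: measurable_prod.
  - apply/andP; split; first by apply: prodr_ge0 => i _; case/andP: (S_le_G i w K0).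
    by apply: ler_prod => i _; exact: S_le_G.
  - by case/andP: (prod_in01 (fun i => g01 i w)).
rewrite -sum_inv; apply: ler_sum => i _.
by rewrite lerBlDl; apply: mean_G_le_S.
Qed.

Theorem mean_prod_independent :
  mean P (fun w => \prod_i g i (X i w)) = \prod_i mean P (fun w => g i (X i w)).
Proof.
apply/eqP; rewrite eq_le; apply/andP; split; apply: (le_of_le_add_inv (m := n)).
  exact: mean_prod_le.
exact: prod_mean_le.
Qed.

End Independence.

Section ExpectedRevenue.
Variables (R : realType) (d : measure_display) (Omega : measurableType d).
Variable P : probability Omega R.
Variables (n : nat) (Y : 'I_n -> Omega -> R) (p : R) (pi : {perm 'I_n}).
Hypothesis p0 : 0 <= p.
Hypothesis mY : forall i, measurable_fun setT (Y i).
Hypothesis Y01 : forall i w, 0 <= Y i w <= 1.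

Let Y0 i w : 0 <= Y i w.
Proof. by case/andP: (Y01 i w). Qed.

Lemma measurable_revenue : measurable_fun setT (fun w => revenue (fun i => Y i w) p pi).
Proof.
rewrite (_ : (fun w => _) = fun w => p * Num.min 1 (\sum_i Y i w)).
  by apply: measurable_funM => //; apply: measurable_minr => //; apply: measurable_sum.
by apply: funext => w; rewrite revenueE.
Qed.

Lemma mean_revenue_ge :
  p * (1 - mean P (fun w => \prod_i (1 - Y i w))) <=
  mean P (fun w => revenue (fun i => Y i w) p pi).
Proof.
have m1Y i : measurable_fun setT (fun w => 1 - Y i w) by apply: measurable_funB.
have mprod : measurable_fun setT (fun w => \prod_i (1 - Y i w)).
  by apply: measurable_prod => i _.
have prod01 w : 0 <= \prod_i (1 - Y i w) <= 1.
  by apply: prod_in01 => i; case/andP: (Y01 i w) => ? ?; apply/andP; split; lra.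
have compl01 w : 0 <= 1 - \prod_i (1 - Y i w) <= 1.
  by case/andP: (prod01 w) => ? ?; apply/andP; split; lra.
rewrite -mean_compl // -(meanZ P p0 _ compl01); last exact: measurable_funB.
apply: (le_mean P _ measurable_revenue (M := p)) => [|w|w].
- by apply: measurable_funM => //; apply: measurable_funB.
- by rewrite revenue_ge // mulr_ge0 //; case/andP: (compl01 w).
- by case/andP: (revenue_bounds pi p0 (Y0^~ w)).
Qed.

End ExpectedRevenue.

Unset Implicit Arguments. Set Strict Implicit.

Theorem mainTheorem7 (R : realType) (d : measure_display)
  (Omega : measurableType d) (P : probability Omega R)
  (dV : measure_display) (V : measurableType dV) (val : V -> R -> R)
  (n : nat) (X : 'I_n -> Omega -> V)
  (p : R) (ystar : 'I_n -> (R -> R) -> R) (pi : {perm 'I_n}) :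
  0 < p ->
  mutually_independent P X ->
  (forall i w, valid_valuation (val (X i w))) ->
  (forall i, measurable_fun setT (fun t : V => ystar i (val t))) ->
  (forall i w, is_demand (val (X i w)) p (ystar i (val (X i w)))) ->
  (\int[P]_w (revenue (fun i => ystar i (val (X i w))) p pi)%:E
     >= p%:E * (1 - \prod_(i < n)
                      (1 - \int[P]_w (ystar i (val (X i w)))%:E)))%E.
Proof.
move=> /ltW p0 indX _ mys demand.
pose Y i w := ystar i (val (X i w)).
have Y01 i w : 0 <= Y i w <= 1 by case: (demand i w).
have mY i : measurable_fun setT (Y i) := measurableT_comp (mys i) (indX.1 i).
have prod_compl : \prod_i (1 - mean P (Y i)) = mean P (fun w => \prod_i (1 - Y i w)).
  rewrite (mean_prod_independent indX (g := fun i t => 1 - ystar i (val t))) => [|i|i w].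
  - by apply: eq_bigr => i _; rewrite (mean_compl P (mY i) (Y01 i)).
  - exact: measurable_funB.
  - by move: (Y01 i w); rewrite /Y /= => /andP[? ?]; apply/andP; split; lra.
have rev0p w : 0 <= revenue (fun i => Y i w) p pi <= p.
  by apply: revenue_bounds => // i; case/andP: (Y01 i w).
rewrite (meanE P _ rev0p); last exact: measurable_revenue.
under eq_bigr do rewrite (meanE P (mY _) (Y01 _)) -EFinB.
rewrite prodEFin -EFinB -EFinM lee_fin prod_compl.
exact: mean_revenue_ge.
Qed.
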